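(* Let $F$ be a field, $n\ge1$, and let $G=\mathrm{Sp}_{2n}(F)$, realized as the subgroup of $\mathrm{SL}_{2n}(F)$ of block matrices $\begin{pmatrix}a&b\\c&d\end{pmatrix}$ ($n\times n$ blocks) with $ad^T-bc^T=1_n$ and $ab^T$, $cd^T$ symmetric. Let $U=\left\{\begin{pmatrix}1&k\\0&1\end{pmatrix}: k\text{ symmetric}\right\}$, $U^T=\left\{\begin{pmatrix}1&0\\k&1\end{pmatrix}: k\text{ symmetric}\right\}$, $H=\left\{\begin{pmatrix}a^{-1}&0\\0&a^T\end{pmatrix}: a\in\mathrm{GL}_n(F)\right\}$. Then $G=U^TUU^TH$. *)

From HB Require Import structures.
From mathcomp Require Import all_boot all_order all_algebra.
Set Implicit Arguments. Unset Strict Implicit. Unset Printing Implicit Defensive.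
Import GRing.Theory.
Local Open Scope ring_scope.

Definition sym_mx (F : fieldType) (n : nat) (k : 'M[F]_n) : Prop := k^T = k.

Definition Sp_mx (F : fieldType) (n : nat) (g : 'M[F]_(n + n)) : Prop :=
  [/\ \det g = 1,
      ulsubmx g *m (drsubmx g)^T - ursubmx g *m (dlsubmx g)^T = 1%:M,
      sym_mx (ulsubmx g *m (ursubmx g)^T) &
      sym_mx (dlsubmx g *m (drsubmx g)^T)].

Definition U_elt (F : fieldType) (n : nat) (k : 'M[F]_n) : 'M[F]_(n + n) :=
  block_mx 1%:M k 0 1%:M.
Definition UT_elt (F : fieldType) (n : nat) (k : 'M[F]_n) : 'M[F]_(n + n) :=
  block_mx 1%:M 0 k 1%:M.
Definition H_elt (F : fieldType) (n : nat) (a : 'M[F]_n) : 'M[F]_(n + n) :=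
  block_mx (invmx a) 0 0 a^T.

(* Write g = (a b; c d).  Since g is invertible, b and d have no common kernel
   vector, and g^T J g = J makes b^T d symmetric.  These two facts give a
   symmetric k with d - k b invertible: the rank decomposition b = L P R reduces
   to the case where b = P is a projector, and there k = P d - P works.
   Left multiplication by an element of U^T replaces d by d - k b, and a
   symplectic matrix with invertible block d is U(b d^-1) U^T(c d^T) H(d^T). *)

From mathcomp Require Import all_boot all_order all_algebra.
Import GRing.Theory.
Set Implicit Arguments. Unset Strict Implicit.
Local Open Scope ring_scope.

Section Symplectic.
Variables (F : fieldType) (n : nat).
Local Notation M := 'M[F]_n.
Local Notation M2 := 'M[F]_(n + n).

Definition J_mx : M2 := block_mx 0 1%:M (- 1%:M) 0.

Definition symplectic (g : M2) : Prop := g *m J_mx *m g^T = J_mx.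

Lemma mul_block_J_tr (a b c d : M) :
  block_mx a b c d *m J_mx *m (block_mx a b c d)^T =
  block_mx (a *m b^T - b *m a^T) (a *m d^T - b *m c^T)
           (c *m b^T - d *m a^T) (c *m d^T - d *m c^T).
Proof.
rewrite /J_mx tr_block_mx !mulmx_block.
rewrite !(mul0mx, mulmx0, mul1mx, mulmx1, mulmxN, mulNmx, addr0, add0r).
by congr block_mx; rewrite addrC.
Qed.

Lemma sym_mx_mul_tr (a b : M) : sym_mx (a *m b^T) <-> a *m b^T - b *m a^T = 0.
Proof.
rewrite /sym_mx trmx_mul trmxK.
by split=> [->|/eqP]; [rewrite subrr | rewrite subr_eq0 => /eqP].
Qed.

Lemma sym_mx_conj (a k : M) : sym_mx k -> sym_mx (a^T *m k *m a).
Proof. by rewrite /sym_mx !trmx_mul trmxK mulmxA => ->. Qed.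

Lemma Sp_mxE (g : M2) : Sp_mx g <-> \det g = 1 /\ symplectic g.
Proof.
rewrite -[g]submxK /Sp_mx /symplectic mul_block_J_tr.
rewrite block_mxKul block_mxKur block_mxKdl block_mxKdr.
set a := ulsubmx g; set b := ursubmx g; set c := dlsubmx g; set d := drsubmx g.
split=> [[-> adbc /sym_mx_mul_tr -> /sym_mx_mul_tr ->] | [-> /eq_block_mx]].
  split=> //; rewrite adbc /J_mx; congr block_mx.
  by rewrite -trmx1 -adbc raddfB /= !trmx_mul !trmxK opprB.
by case=> ab adbc _ cd; split=> //; apply/sym_mx_mul_tr.
Qed.

Lemma J_mxK : J_mx *m J_mx = - 1%:M.
Proof.
rewrite /J_mx mulmx_block.
rewrite !(mul0mx, mulmx0, mul1mx, mulmx1, mulmxN, mulNmx, addr0, add0r).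
by rewrite (scalar_mx_block n n) opp_block_mx oppr0.
Qed.

Lemma symplectic_tr (g : M2) : symplectic g -> symplectic g^T.
Proof.
rewrite /symplectic trmxK => gJ.
have gV : g *m (- (J_mx *m g^T *m J_mx)) = 1%:M.
  by rewrite mulmxN !mulmxA gJ J_mxK opprK.
have /(congr1 (mulmx J_mx)) := mulmx1C gV.
by rewrite mulNmx mulmxN mulmx1 !mulmxA J_mxK !mulNmx mul1mx opprK.
Qed.

Lemma symplectic_mul (g h : M2) :
  symplectic g -> symplectic h -> symplectic (g *m h).
Proof.
rewrite /symplectic trmx_mul => gJ hJ.
by rewrite -!mulmxA (mulmxA h) (mulmxA (h *m J_mx)) hJ mulmxA.
Qed.

Lemma symplectic_UT (k : M) : sym_mx k -> symplectic (UT_elt k).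
Proof.
rewrite /symplectic /UT_elt mul_block_J_tr /J_mx => symk.
by rewrite !(trmx0, trmx1, mulmx0, mul0mx, mul1mx, mulmx1, subr0, sub0r) symk subrr.
Qed.

Lemma symplectic_U (k : M) : sym_mx k -> symplectic (U_elt k).
Proof.
rewrite /symplectic /U_elt mul_block_J_tr /J_mx => symk.
by rewrite !(trmx0, trmx1, mulmx0, mul0mx, mul1mx, mulmx1, subr0, sub0r) symk subrr.
Qed.

Lemma symplectic_H (a : M) : a \in unitmx -> symplectic (H_elt a).
Proof.
rewrite /symplectic /H_elt mul_block_J_tr /J_mx => ua.
rewrite !(trmx0, trmx1, mulmx0, mul0mx, mul1mx, mulmx1, subr0, sub0r, oppr0).
by rewrite trmxK mulVmx // -trmx_mul mulVmx // trmx1.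
Qed.

Lemma symplectic_trmx_ursubmx_drsubmx (a b c d : M) :
  symplectic (block_mx a b c d) -> b^T *m d = d^T *m b.
Proof.
move/symplectic_tr; rewrite /symplectic tr_block_mx mul_block_J_tr !trmxK /J_mx.
by case/eq_block_mx=> _ _ _ /eqP; rewrite subr_eq0 => /eqP.
Qed.

Lemma UT_elt_mul_block (l a b c d : M) :
  UT_elt l *m block_mx a b c d = block_mx a b (c + l *m a) (d + l *m b).
Proof.
by rewrite /UT_elt mulmx_block !(mul1mx, mul0mx, add0r, addr0) addrC [d + _]addrC.
Qed.

Lemma unitmx_ker0 (A : M) : (forall y : 'cV_n, A *m y = 0 -> y = 0) -> A \in unitmx.
Proof.
move=> kerA; rewrite -unitmx_tr unitmxE unitfE; apply/negP => /det0P[v].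
apply: contra_neq_not => /(congr1 trmx); rewrite trmx_mul trmxK trmx0.
by move/kerA/(congr1 trmx); rewrite trmxK trmx0.
Qed.

Lemma sym_shift_projector (P d : M) :
    P *m P = P -> P^T = P -> P *m d = d^T *m P ->
    (forall y : 'cV_n, P *m y = 0 -> d *m y = 0 -> y = 0) ->
  sym_mx (P *m d - P) /\ d - (P *m d - P) *m P \in unitmx.
Proof.
move=> PP symP Pd ker0; split.
  by rewrite /sym_mx raddfB /= trmx_mul symP Pd.
have PdP : P *m d *m P = P *m d by rewrite Pd -mulmxA PP.
rewrite mulmxBl PdP PP opprB addrA; apply: unitmx_ker0 => y.
rewrite !mulmxDl mulNmx => Ny0.
have Py0 : P *m y = 0.
  have := congr1 (mulmx P) Ny0.
  by rewrite mulmx0 !mulmxDr mulmxN !mulmxA PP addrAC subrr add0r.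
apply: ker0 => //; move: Ny0.
by rewrite Py0 addr0 Pd -mulmxA Py0 mulmx0 subr0.
Qed.

Lemma exists_sym_shift_unit (b d : M) :
    b^T *m d = d^T *m b ->
    (forall x : 'cV_n, b *m x = 0 -> d *m x = 0 -> x = 0) ->
  exists2 k, sym_mx k & d - k *m b \in unitmx.
Proof.
move=> bd ker0.
set L := col_ebase b; set R := row_ebase b; set P : M := pid_mx (\rank b).
have uL : L \in unitmx by apply: col_ebase_unit.
have uR : R \in unitmx by apply: row_ebase_unit.
have uLT : L^T \in unitmx by rewrite unitmx_tr.
have LPR : L *m P *m R = b by apply: mulmx_ebase.
have LP : L *m P = b *m invmx R by rewrite -LPR mulmxK.
set d' := L^T *m d *m invmx R.
have PP : P *m P = P by rewrite pid_mx_id // rank_leq_col.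
have symP : P^T = P by rewrite tr_pid_mx.
have Pd' : P *m d' = d'^T *m P.
  rewrite /d' !trmx_mul trmxK -{1}symP !mulmxA -(trmx_mul L P) LP trmx_mul.
  by rewrite -(mulmxA _ L) LP -!mulmxA; congr (_ *m _); rewrite !mulmxA bd.
have ker'0 (y : 'cV_n) : P *m y = 0 -> d' *m y = 0 -> y = 0.
  move=> Py0 d'y0; rewrite -[y](mulKVmx uR); set x := invmx R *m y.
  have bx0 : b *m x = 0 by rewrite mulmxA -LP -mulmxA Py0 mulmx0.
  have Ldx : L^T *m (d *m x) = d' *m y by rewrite /x !mulmxA.
  have dx0 : d *m x = 0 by rewrite -(mulKmx uLT (d *m x)) Ldx d'y0 mulmx0.
  by rewrite (ker0 x bx0 dx0) mulmx0.
have [symk' uN] := sym_shift_projector PP symP Pd' ker'0.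
set k' := P *m d' - P in symk' uN; clearbody k'.
exists (invmx L^T *m k' *m invmx L); first by rewrite -trmx_inv; apply: sym_mx_conj.
have -> : d - invmx L^T *m k' *m invmx L *m b = invmx L^T *m (d' - k' *m P) *m R.
  rewrite mulmxBr mulmxBl /d' mulmxA mulKmx // mulmxKV // -LPR !mulmxA.
  by rewrite -(mulmxA _ (invmx L) L) mulVmx // mulmx1.
by rewrite !unitmx_mul unitmx_inv uLT uN uR.
Qed.

Lemma symplectic_factor_unit (a b c d : M) :
    symplectic (block_mx a b c d) -> d \in unitmx ->
  [/\ sym_mx (b *m invmx d), sym_mx (c *m d^T) &
      block_mx a b c d = U_elt (b *m invmx d) *m UT_elt (c *m d^T) *m H_elt d^T].
Proof.
move=> gJ ud; have bd := symplectic_trmx_ursubmx_drsubmx gJ.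
have udT : d^T \in unitmx by rewrite unitmx_tr.
move: gJ; rewrite /symplectic mul_block_J_tr /J_mx => /eq_block_mx[_ adbc _ /eqP].
rewrite subr_eq0 => /eqP cd; split.
- rewrite /sym_mx trmx_mul trmx_inv -[LHS](mulmxK ud) -(mulmxA _ b^T) bd.
  by rewrite mulmxA mulVmx // mul1mx.
- by rewrite /sym_mx trmx_mul trmxK cd.
rewrite /U_elt /UT_elt /H_elt !mulmx_block trmxK.
rewrite !(mul1mx, mul0mx, mulmx1, mulmx0, add0r, addr0) mulmxKV // mulmxK //.
by rewrite cd mulmxA mulmxKV // -adbc subrK mulmxK.
Qed.

Lemma Sp_mx_decomp (g : M2) : Sp_mx g ->
  exists (k1 k2 k3 a : M),
    [/\ sym_mx k1, sym_mx k2, sym_mx k3, a \in unitmx &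
        g = UT_elt k1 *m U_elt k2 *m UT_elt k3 *m H_elt a].
Proof.
case/Sp_mxE=> detg gJ.
have ug : g \in unitmx by rewrite unitmxE detg unitr1.
move: gJ ug; rewrite -[g]submxK.
move: (ulsubmx g) (ursubmx g) (dlsubmx g) (drsubmx g) => a b c d gJ ug.
have ker0 (x : 'cV_n) : b *m x = 0 -> d *m x = 0 -> x = 0.
  move=> bx0 dx0; have := mulKmx ug (col_mx 0 x).
  by rewrite mul_block_col !mulmx0 !add0r bx0 dx0 col_mx0 mulmx0 -col_mx0 => /eq_col_mx[].
have [k symk ud'] := exists_sym_shift_unit (symplectic_trmx_ursubmx_drsubmx gJ) ker0.
have symNk : sym_mx (- k) by rewrite /sym_mx raddfN /= symk.
have gJ' := symplectic_mul (symplectic_UT symNk) gJ.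
rewrite UT_elt_mul_block !mulNmx in gJ'.
have [sym2 sym3 E] := symplectic_factor_unit gJ' ud'.
exists k, (b *m invmx (d - k *m b)), ((c - k *m a) *m (d - k *m b)^T), (d - k *m b)^T.
split=> //; first by rewrite unitmx_tr.
by rewrite -!mulmxA (mulmxA (U_elt _)) -E UT_elt_mul_block !subrK.
Qed.

Lemma decomp_Sp_mx (k1 k2 k3 a : M) :
    sym_mx k1 -> sym_mx k2 -> sym_mx k3 -> a \in unitmx ->
  Sp_mx (UT_elt k1 *m U_elt k2 *m UT_elt k3 *m H_elt a).
Proof.
move=> sym1 sym2 sym3 ua; apply/Sp_mxE; split.
  rewrite !det_mulmx /UT_elt /U_elt /H_elt !(det_lblock, det_ublock) !det1.
  by rewrite det_inv det_tr !mul1r mulVr // -unitmxE.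
apply: symplectic_mul (symplectic_H ua).
apply: symplectic_mul (symplectic_UT sym3).
exact: symplectic_mul (symplectic_UT sym1) (symplectic_U sym2).
Qed.

End Symplectic.

Theorem lemma4p1 (F : fieldType) (n : nat) (hn : (0 < n)%N) (g : 'M[F]_(n + n)) :
  Sp_mx g <->
  exists (k1 k2 k3 a : 'M[F]_n),
    [/\ sym_mx k1, sym_mx k2, sym_mx k3, a \in unitmx &
        g = UT_elt k1 *m U_elt k2 *m UT_elt k3 *m H_elt a].
Proof.
split; first exact: Sp_mx_decomp.
by case=> k1 [k2 [k3 [a [sym1 sym2 sym3 ua ->]]]]; apply: decomp_Sp_mx.
Qed.
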